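(* Let $H=\sum_{k=1}^{m}\mathbb{Z}u_{k}$ with $u_k\in\mathbb{R}^n$, labelled so that $u_1,\dots,u_p$ is a basis of $\mathrm{vect}(H)$. Then for every $P\in GL(n,\mathbb{R})$, $L(M_H)=L(M_{P(H)})$, where $M_{P(H)}$ is computed from the ordered generating family $(Pu_1,\dots,Pu_m)$ of $P(H)$. In particular $\widetilde{\mathrm{dim}}(\overline{H})=\widetilde{\mathrm{dim}}(\overline{P(H)})$.
   Context: $\mathrm{vect}(A)$ is the real span of $A$; bars denote closure. Complex dimension: for an additive subgroup $G$ of $\mathbb{R}^n$, $\widetilde{\mathrm{dim}}(G):=p+i(s-p)$, $p=\max\{\dim V: V\text{ a vector subspace},\ V\subset G\}$, $s=\dim\mathrm{vect}(G)$. Definition of $L(M_G)$ for an ordered generating family $w_1,\dots,w_m$ of $G$ whose first $q$ members form a basis of $\mathrm{vect}(G)$: for $k=q+1,\dots,m$ write $w_k=\sum_{j=1}^q\alpha_{k,j}w_j$. Choose $I_k\subset\{1,\dots,q\}$ such that $\{1\}\cup\{\alpha_{k,i}:i\in I_k\}$ is a longest sublist of $1,\alpha_{k,1},\dots,\alpha_{k,q}$ linearly independent over $\mathbb{Q}$. For $j\notin I_k$ write $\alpha_{k,j}=t_{k,j}+\sum_{i\in I_k}\gamma^{(k)}_{j,i}\alpha_{k,i}$ with rational $t_{k,j},\gamma^{(k)}_{j,i}$. Choose $N\in\mathbb{N}^*$ with $m^{(k)}_{i,j}:=N\gamma^{(k)}_{i,j}\in\mathbb{Z}$, and put $w'_{k,j}=Nw_j+\sum_{i\notin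 I_k}m^{(k)}_{i,j}w_i$ for $j\in I_k$. $M_G$ is the matrix with columns all $w'_{k,j}$, and $L(M_G)=\mathrm{rank}(M_G)$. *)

From HB Require Import structures.
From mathcomp Require Import all_boot all_order all_algebra.
From mathcomp Require Import all_classical all_reals all_analysis.
From mathcomp Require Import complex.

Set Implicit Arguments.
Unset Strict Implicit.
Unset Printing Implicit Defensive.

Import Order.TTheory GRing.Theory Num.Theory.
Local Open Scope ring_scope.
Local Open Scope classical_set_scope.

Section Defs.
Variables (R : realType) (n : nat).
Implicit Types (G : set 'rV[R]_n).

(** The additive subgroup  sum_{k < m} Z w_k  of R^n (vectors are row vectors;
    indices are 0-based: w 0, ..., w (m-1)). *)
Definition zspan (w : nat -> 'rV[R]_n) (m : nat) : set 'rV[R]_n :=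
  [set x | exists z : nat -> int, x = \sum_(k < m) (w k) *~ z k].

(** V (a square matrix, read as its row space) is a vector subspace contained in G *)
Definition subspace_in G (V : 'M[R]_n) : Prop :=
  forall v : 'rV[R]_n, (v <= V)%MS -> G v.

Definition dimt_p G : nat :=
  \max_(r < n.+1 | `[< exists V : 'M[R]_n, subspace_in G V /\ \rank V = r >]) r.

Definition dimt_s G : nat :=
  \big[minn/n]_(r < n.+1 | `[< exists V : 'M[R]_n,
        (forall g, G g -> (g <= V)%MS) /\ \rank V = r >]) r.

Definition cdim G : R[i] := ((dimt_p G)%:R +i* ((dimt_s G - dimt_p G)%N)%:R)%C.

Definition prefix_basis (w : nat -> 'rV[R]_n) (m q : nat) : Prop :=
  [/\ (q <= m)%N,
      row_free (\matrix_(i < q) w i) &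
      forall k, (k < m)%N -> (w k <= \matrix_(i < q) w i)%MS].

Definition Qindep_on (I : finType) (x : I -> R) (S : {set I}) : Prop :=
  forall c : I -> rat, \sum_(i in S) ratr (c i) * x i = 0 ->
    forall i, i \in S -> c i = 0.

(** The list 1, a_0, ..., a_{q-1}, indexed by option 'I_q (None is the entry 1) *)
Definition one_alpha (q : nat) (a : 'I_q -> R) (o : option 'I_q) : R :=
  if o is Some j then a j else 1.

Record Mchoice (q : nat) := MChoice {
  mc_alpha : nat -> 'I_q -> R;
  mc_I     : nat -> {set 'I_q};
  mc_t     : nat -> 'I_q -> rat;
  mc_gamma : nat -> 'I_q -> 'I_q -> rat;
  mc_N     : nat;
  mc_m     : nat -> 'I_q -> 'I_q -> int
}.

Definition Mchoice_ok (w : nat -> 'rV[R]_n) (m q : nat) (d : Mchoice q) : Prop :=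
  (0 < mc_N d)%N /\
  forall k, (q <= k < m)%N ->
  let a := mc_alpha d k in
  let I := mc_I d k in
  let S := None |: (Some @: I) in
  [/\ w k = \sum_(j < q) a j *: w j,
      Qindep_on (one_alpha a) S,
      (forall S' : {set option 'I_q}, Qindep_on (one_alpha a) S' -> #|S'| <= #|S|)%N,
      (forall j, j \notin I ->
         a j = ratr (mc_t d k j) + \sum_(i in I) ratr (mc_gamma d k j i) * a i) &
      (forall i j, i \notin I -> j \in I ->
         ((mc_m d k i j)%:~R : rat) = (mc_N d)%:R * mc_gamma d k i j)].

Definition wprime (w : nat -> 'rV[R]_n) (q : nat) (d : Mchoice q) (k : nat) (j : 'I_q)
  : 'rV[R]_n :=
  (mc_N d)%:R *: w j + \sum_(i < q | i \notin mc_I d k) (mc_m d k i j)%:~R *: w i.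

(** L(M_G) = rank of the matrix whose columns are all the w'_{k,j}
    (q <= k < m, j in I_k), i.e. the dimension of their span. *)
Definition LM (w : nat -> 'rV[R]_n) (m q : nat) (d : Mchoice q) : nat :=
  \rank (\sum_(k < m | (q <= k)%N) \sum_(j < q | j \in mc_I d k)
            <<wprime w d k j>>)%MS.

End Defs.

(* For fixed k, the coefficient row of w'_{k,j} / N (j in I_k) in the basis
   w_0, ..., w_{q-1} annihilates every rational row r with r . alpha_k rational:
   otherwise 1 and the alpha_{k,i}, i in I_k, would satisfy a rational relation.
   Applied to the relations alpha_{k,l} - sum_i gamma'_{l,i} alpha_{k,i} = t'_l of
   a second admissible choice, this writes every w'_{k,j} of one choice as a
   combination of those of the other, so L(M_G) does not depend on the choices.
   Since alpha_k are the coordinates of w_k in a basis, they are unchanged by an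
   invertible P, hence any admissible choice for P(H) is admissible for H and
   M_{P(H)} = P M_H. The complex dimension part holds because x |-> x P is a
   homeomorphism that preserves the dimension of subspaces. *)

From HB Require Import structures.
From mathcomp Require Import all_boot all_order all_algebra.
From mathcomp Require Import all_classical all_reals all_analysis.
From mathcomp Require Import complex.

Set Implicit Arguments.
Unset Strict Implicit.
Unset Printing Implicit Defensive.

Import numFieldNormedType.Exports.
Import Order.TTheory GRing.Theory Num.Theory.
Local Open Scope ring_scope.
Local Open Scope classical_set_scope.

Section ReducedRows.
Variables (K : unitRingType) (q : nat).

(* wprime w d k j = N *: \sum_l reduced_row (mc_I d k) (mc_gamma d k) j l *: w l *)
Definition reduced_row (I : {set 'I_q}) (g : 'I_q -> 'I_q -> rat) (j l : 'I_q) : K :=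
  if l == j then 1 else if l \in I then 0 else ratr (g l j).

Lemma sum_reduced_row (V : lmodType K) (I : {set 'I_q}) g j (y : 'I_q -> V) :
  j \in I ->
  \sum_l reduced_row I g j l *: y l = y j + \sum_(l | l \notin I) ratr (g l j) *: y l.
Proof.
move=> jI; rewrite (bigD1 j) //= /reduced_row eqxx scale1r; congr (_ + _).
rewrite (bigID (mem I)) /= big1 ?add0r => [|l /andP[/negPf-> ->]]; last first.
  by rewrite scale0r.
apply: eq_big => [l|l /andP[/negPf-> /negPf->] //].
by case: eqP => // ->; rewrite jI.
Qed.

End ReducedRows.

Arguments reduced_row {K q} I g j l.

Section RationalReductions.
Variables (R : realType) (q : nat) (a : 'I_q -> R).

Definition rat_reduction (I : {set 'I_q}) (t : 'I_q -> rat) (g : 'I_q -> 'I_q -> rat) :=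
  forall j, j \notin I -> a j = ratr (t j) + \sum_(i in I) ratr (g j i) * a i.

Lemma sum_option_setU1_imset (I : {set 'I_q}) (F : option 'I_q -> R) :
  \sum_(o in None |: (Some @: I)) F o = F None + \sum_(j in I) F (Some j).
Proof.
rewrite big_setU1 /=; last by apply/imsetP => -[].
by rewrite big_imset //= => x y _ _ [].
Qed.

Lemma rat_reduction_dot (I : {set 'I_q}) t g (r : 'I_q -> rat) : rat_reduction I t g ->
  \sum_i ratr (r i) * a i =
  \sum_(l | l \notin I) ratr (r l * t l)
  + \sum_(i in I) ratr (r i + \sum_(l | l \notin I) g l i * r l) * a i.
Proof.
move=> red; rewrite (bigID (mem I)) /= addrC.
have -> : \sum_(l | l \notin I) ratr (r l) * a l =
    \sum_(l | l \notin I) ratr (r l * t l)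
    + \sum_(l | l \notin I) \sum_(i in I) ratr (g l i * r l) * a i.
  rewrite -big_split /=; apply: eq_bigr => l lI.
  rewrite red // mulrDr rmorphM mulr_sumr; congr (_ + _).
  by apply: eq_bigr => i _; rewrite rmorphM mulrA [ratr (r l) * _]mulrC.
rewrite -addrA exchange_big -big_split /=; congr (_ + _).
by apply: eq_bigr => i _; rewrite rmorphD rmorph_sum mulrDl mulr_suml addrC.
Qed.

Lemma reduced_row_orthogonal (I : {set 'I_q}) t g (r : 'I_q -> rat) (s : rat) j :
  Qindep_on (one_alpha a) (None |: (Some @: I)) -> rat_reduction I t g ->
  \sum_i ratr (r i) * a i = ratr s -> j \in I ->
  \sum_l (reduced_row I g j l : R) * ratr (r l) = 0.
Proof.
move=> indep red ra jI.
pose c o := if o is Some i then r i + \sum_(l | l \notin I) g l i * r l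
            else \sum_(l | l \notin I) r l * t l - s.
suff /(congr1 (ratr : rat -> R)) : c (Some j) = 0.
  rewrite rmorph0 => cj0; rewrite -[RHS]cj0.
  rewrite -[LHS]/(\sum_l (reduced_row I g j l : R) *: (ratr (r l) : R^o)).
  rewrite sum_reduced_row // rmorphD rmorph_sum.
  by congr (_ + _); apply: eq_bigr => l _; rewrite rmorphM.
apply: indep; last by rewrite !inE; apply/orP; right; apply/imsetP; exists j.
rewrite sum_option_setU1_imset /= mulr1 rmorphB rmorph_sum.
rewrite addrAC; move: ra; rewrite (rat_reduction_dot r red) => ->; exact: subrr.
Qed.

Lemma reduced_row_expand (I1 I2 : {set 'I_q}) t1 g1 t2 g2 j :
  Qindep_on (one_alpha a) (None |: (Some @: I1)) ->
  rat_reduction I1 t1 g1 -> rat_reduction I2 t2 g2 -> j \in I1 ->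
  forall l, reduced_row I1 g1 j l =
    \sum_(j' in I2) reduced_row I1 g1 j j' * (reduced_row I2 g2 j' l : R).
Proof.
move=> indep red1 red2 jI l; have [lI2|lI2] := boolP (l \in I2).
  rewrite (bigD1 l) //= [reduced_row I2 g2 l l]/reduced_row eqxx mulr1.
  rewrite big1 ?addr0 // => i.
  by case/andP=> _ /negPf il; rewrite [reduced_row I2 g2 i l]/reduced_row eq_sym il lI2 mulr0.
have -> : \sum_(j' in I2) reduced_row I1 g1 j j' * (reduced_row I2 g2 j' l : R) =
    \sum_(j' in I2) reduced_row I1 g1 j j' * ratr (g2 l j').
  apply: eq_bigr => i iI2; rewrite [reduced_row I2 g2 i l]/reduced_row (negPf lI2).
  by case: eqP => // li; rewrite li iI2 in lI2.
pose r i := if i == l then 1 else if i \in I2 then - g2 l i else 0.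
have sum_r (y : 'I_q -> R) :
    \sum_i y i * ratr (r i) = y l - \sum_(i in I2) y i * ratr (g2 l i).
  rewrite (bigD1 l) //= /r eqxx rmorph1 mulr1; congr (_ + _).
  rewrite (bigID (mem I2)) /= [X in _ + X]big1 ?addr0 => [|i /andP[/negPf-> /negPf->]];
    last by rewrite rmorph0 mulr0.
  rewrite -sumrN; apply: eq_big => [i|i /andP[/negPf-> ->]]; last by rewrite rmorphN mulrN.
  by case: eqP => // ->; rewrite (negPf lI2).
have r_rel : \sum_i ratr (r i) * a i = ratr (t2 l).
  under eq_bigr do rewrite mulrC.
  rewrite sum_r; under [X in _ - X]eq_bigr do rewrite mulrC.
  by rewrite {1}(red2 l lI2) addrK.
apply/eqP; rewrite -subr_eq0 -sum_r.
exact/eqP/(reduced_row_orthogonal indep red1 r_rel).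
Qed.

End RationalReductions.

Lemma row_free_sum_inj (F : fieldType) (q n : nat) (v : 'I_q -> 'rV[F]_n)
    (a1 a2 : 'I_q -> F) :
  row_free (\matrix_i v i) -> \sum_j a1 j *: v j = \sum_j a2 j *: v j -> a1 = a2.
Proof.
move=> free eq_sum; have sumE (c : 'I_q -> F) : \sum_j c j *: v j = \row_j c j *m \matrix_i v i.
  by rewrite mulmx_sum_row; apply: eq_bigr => j _; rewrite mxE rowK.
move: eq_sum; rewrite !sumE => /(row_free_inj free)/rowP eq_row.
by apply/funext => j; have := eq_row j; rewrite !mxE.
Qed.

Section WSpan.
Variables (R : realType) (n m q : nat).
Implicit Types (w : nat -> 'rV[R]_n) (d : Mchoice R q).

Definition wspan w d : 'M[R]_n :=
  (\sum_(k < m | (q <= k)%N) \sum_(j < q | j \in mc_I d k) <<wprime w d k j>>)%MS.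

Lemma LME w d : LM w m d = \rank (wspan w d).
Proof. by []. Qed.

Lemma wprime_reduced w d k j :
  j \in mc_I d k ->
  (forall i, i \notin mc_I d k ->
     ((mc_m d k i j)%:~R : rat) = (mc_N d)%:R * mc_gamma d k i j) ->
  wprime w d k j = (mc_N d)%:R *: \sum_l reduced_row (mc_I d k) (mc_gamma d k) j l *: w l.
Proof.
move=> jI mrel; rewrite sum_reduced_row // scalerDr scaler_sumr; congr (_ + _).
apply: eq_bigr => i iI; rewrite scalerA.
by have /(congr1 (ratr : rat -> R)) := mrel i iI; rewrite rmorph_int rmorphM rmorph_nat => ->.
Qed.

Lemma Mchoice_ok_alpha w d1 d2 k :
  prefix_basis w m q -> Mchoice_ok w m d1 -> Mchoice_ok w m d2 -> (q <= k < m)%N ->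
  mc_alpha d1 k = mc_alpha d2 k.
Proof.
move=> [_ free _] [_ /(_ k)ok1] [_ /(_ k)ok2] km.
have [+ _ _ _ _] := ok1 km; have [-> _ _ _ _] := ok2 km.
by move/esym; apply: row_free_sum_inj free.
Qed.

Lemma wprime_sub_span w d1 d2 k j :
  prefix_basis w m q -> Mchoice_ok w m d1 -> Mchoice_ok w m d2 ->
  (q <= k < m)%N -> j \in mc_I d1 k ->
  (wprime w d1 k j <= \sum_(j' < q | j' \in mc_I d2 k) <<wprime w d2 k j'>>)%MS.
Proof.
move=> basis ok1 ok2 km jI.
have alpha_eq := Mchoice_ok_alpha basis ok1 ok2 km.
case: ok1 => _ /(_ k km) /= [_ indep _ red1 mrel1].
case: ok2 => N2_gt0 /(_ k km) /= [_ _ _ red2 mrel2].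
rewrite -alpha_eq in red2.
rewrite (wprime_reduced _ jI (fun i iI => mrel1 i j iI jI)).
under [X in (_ *: X <= _)%MS]eq_bigr => l _
  do rewrite (reduced_row_expand indep red1 red2 jI) scaler_suml.
rewrite exchange_big /=; apply: scalemx_sub; apply: summx_sub => j' j'I.
under eq_bigr do rewrite -scalerA; rewrite -scaler_sumr; apply: scalemx_sub.
apply: (sumsmx_sup j') => //.
rewrite genmxE (wprime_reduced _ j'I (fun i iI => mrel2 i j' iI j'I)).
by rewrite eqmx_scale // pnatr_eq0 -lt0n.
Qed.

Lemma wspan_sub w d1 d2 :
  prefix_basis w m q -> Mchoice_ok w m d1 -> Mchoice_ok w m d2 ->
  (wspan w d1 <= wspan w d2)%MS.
Proof.
move=> basis ok1 ok2; apply/sumsmx_subP => k qk; apply/sumsmx_subP => j jI.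
have km : (q <= k < m)%N by rewrite qk ltn_ord.
by rewrite genmxE; apply: (sumsmx_sup k) => //; apply: wprime_sub_span.
Qed.

Lemma LM_choice_indep w d1 d2 :
  prefix_basis w m q -> Mchoice_ok w m d1 -> Mchoice_ok w m d2 ->
  LM w m d1 = LM w m d2.
Proof.
move=> basis ok1 ok2; apply/eqP; rewrite !LME eqn_leq.
by rewrite !mxrankS ?(wspan_sub basis).
Qed.

Lemma Mchoice_ok_mulmx w (Q : 'M[R]_n) d : Q \in unitmx ->
  Mchoice_ok (fun k => w k *m Q) m d -> Mchoice_ok w m d.
Proof.
move=> Qunit [N_gt0 ok]; split=> // k km.
have [wk indep max red mrel] := ok k km; split=> //.
apply: (can_inj (mulmxK Qunit)); rewrite wk mulmx_suml.
by apply: eq_bigr => j _; rewrite scalemxAl.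
Qed.

Lemma wprime_mulmx w (Q : 'M[R]_n) d k j :
  wprime (fun k => w k *m Q) d k j = wprime w d k j *m Q.
Proof.
rewrite /wprime mulmxDl mulmx_suml -scalemxAl; congr (_ + _).
by apply: eq_bigr => i _; rewrite scalemxAl.
Qed.

Lemma wspan_mulmx w (Q : 'M[R]_n) d :
  (wspan (fun k => w k *m Q) d :=: wspan w d *m Q)%MS.
Proof.
apply: eqmx_sym; apply: eqmx_trans (sumsmxMr _ _ _) _; apply: eqmx_sums => k _.
apply: eqmx_trans (sumsmxMr _ _ _) _; apply: eqmx_sums => j _.
rewrite wprime_mulmx; exact: eqmx_trans (eqmxMr _ (genmxE _)) (eqmx_sym (genmxE _)).
Qed.

Lemma LM_mulmx w (Q : 'M[R]_n) d : Q \in unitmx ->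
  LM (fun k => w k *m Q) m d = LM w m d.
Proof. by move=> Qunit; rewrite !LME wspan_mulmx mxrankMfree ?row_free_unit. Qed.

End WSpan.

Lemma image_closure_sub (T U : topologicalType) (f : T -> U) (A : set T) :
  continuous f -> f @` closure A `<=` closure (f @` A).
Proof.
move=> f_cont _ [x clAx <-] B /f_cont/clAx[a [Aa Bfa]].
by exists (f a); split=> //; exists a.
Qed.

Lemma closure_image_bicontinuous (T U : topologicalType) (f : T -> U) (g : U -> T)
    (A : set T) :
  continuous f -> continuous g -> cancel f g -> cancel g f ->
  closure (f @` A) = f @` closure A.
Proof.
move=> f_cont g_cont fK gK; apply/seteqP; split; last exact: image_closure_sub.
move=> y clfAy; exists (g y); last by rewrite gK.
have gfA : g @` (f @` A) = A.
  apply/seteqP; split=> [_ [_ [a Aa <-] <-]|a Aa]; first by rewrite fK.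
  by exists (f a); [exists a | rewrite fK].
by rewrite -gfA; apply: image_closure_sub => //; exists y.
Qed.

Lemma mulmx_continuous (K : numFieldType) (n p : nat) (Q : 'M[K]_(n, p)) :
  continuous (fun x : 'rV[K]_n => x *m Q).
Proof.
have -> : (fun x : 'rV[K]_n => x *m Q) = (fun x => \sum_i x 0 i *: row i Q).
  by apply/funext => x; rewrite mulmx_sum_row.
apply: continuous_big => [|i _ x]; first exact: add_continuous.
by apply: continuousZr_tmp; apply: coord_continuous.
Qed.

Section UnitImage.
Variables (R : realType) (n : nat) (P : 'M[R]_n).
Hypothesis P_unit : P \in unitmx.

Let mxrankMP (k : nat) (V : 'M[R]_(k, n)) : \rank (V *m P) = \rank V.
Proof. by rewrite mxrankMfree ?row_free_unit. Qed.

Let mxrankMinvP (k : nat) (V : 'M[R]_(k, n)) : \rank (V *m invmx P) = \rank V.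
Proof. by rewrite mxrankMfree ?row_free_unit ?unitmx_inv. Qed.

Lemma dimt_p_mulmx (G : set 'rV[R]_n) : dimt_p ((fun x => x *m P) @` G) = dimt_p G.
Proof.
apply: eq_bigl => r; apply/asboolP/asboolP => -[V [VG <-]].
  exists (V *m invmx P); split; last exact: mxrankMinvP.
  move=> v vV; have /VG[g Gg /(can_inj (mulmxK P_unit)) <-] // : (v *m P <= V)%MS.
  by rewrite -[V](mulmxKV P_unit) submxMr.
exists (V *m P); split; last exact: mxrankMP.
move=> v vVP; exists (v *m invmx P); last by rewrite mulmxKV.
by apply: VG; rewrite -[V](mulmxK P_unit) submxMr.
Qed.

Lemma dimt_s_mulmx (G : set 'rV[R]_n) : dimt_s ((fun x => x *m P) @` G) = dimt_s G.
Proof.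
apply: eq_bigl => r; apply/asboolP/asboolP => -[V [GV <-]].
  exists (V *m invmx P); split; last exact: mxrankMinvP.
  by move=> g Gg; rewrite -[g](mulmxK P_unit) submxMr // GV //; exists g.
exists (V *m P); split; last exact: mxrankMP.
by move=> _ [g Gg <-]; rewrite submxMr // GV.
Qed.

Lemma cdim_closure_mulmx (G : set 'rV[R]_n) :
  cdim (closure ((fun x => x *m P) @` G)) = cdim (closure G).
Proof.
rewrite (@closure_image_bicontinuous _ _ _ (fun x : 'rV[R]_n => x *m invmx P)).
- by rewrite /cdim dimt_p_mulmx dimt_s_mulmx.
- exact: mulmx_continuous.
- exact: mulmx_continuous.
- exact: mulmxK.
- exact: mulmxKV.
Qed.

End UnitImage.

Theorem lemma3p3 (R : realType) (n m p : nat) (u : nat -> 'rV[R]_n)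
    (hbasis : prefix_basis u m p) (P : 'M[R]_n) (hP : P \in unitmx) :
  (forall (dH dPH : Mchoice R p),
      Mchoice_ok u m dH ->
      Mchoice_ok (fun k => u k *m P) m dPH ->
      LM u m dH = LM (fun k => u k *m P) m dPH)
  /\ cdim (closure (zspan u m : set 'rV[R]_n))
     = cdim (closure ((fun x => x *m P) @` zspan u m : set 'rV[R]_n)).
Proof.
split; last by rewrite cdim_closure_mulmx.
move=> dH dPH okH okPH; rewrite LM_mulmx //.
exact: LM_choice_indep hbasis okH (Mchoice_ok_mulmx hP okPH).
Qed.
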